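(* Let $p$ be a prime and $B\subset\mathrm{GL}_2(\mathbb{F}_p)$ the subgroup of upper triangular matrices. Let $H\subset B$ be a subgroup of order divisible by $p$ of the form $H=D\cdot U$, where $D\subset B$ is a subgroup of diagonal matrices and $U$ is the cyclic group generated by $\begin{pmatrix}1&1\\0&1\end{pmatrix}$ (which is normal in $H$). Let $\pi:H\to H/U\simeq D$ be the quotient map. Let $\phi$ be an automorphism of $H$ such that $\pi(x)=\pi(\phi(x))$ for all $x\in H$. Then $\phi$ is given by conjugation in $B$: there is $A\in B$ such that $\phi(x)=AxA^{-1}$ for all $x\in H$. *)

From HB Require Import structures.
From mathcomp Require Import all_boot all_order all_algebra all_fingroup all_solvable.
Set Implicit Arguments. Unset Strict Implicit. Unset Printing Implicit Defensive.
Import GRing.Theory.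

(* Group GL_2(F_p) is {'GL_2('F_p)}; matrix indices 0 = ord0, 1 = ord_max. *)

Local Open Scope group_scope.

Definition Borel (p : nat) : {set {'GL_2(p)}} :=
  [set g : {'GL_2(p)} | GLval g ord_max ord0 == 0%R].

Definition diagGL (p : nat) : {set {'GL_2(p)}} :=
  [set g : {'GL_2(p)} | (GLval g ord_max ord0 == 0%R) && (GLval g ord0 ord_max == 0%R)].

Definition umx (p : nat) : 'M['F_p]_2 :=
  \matrix_(i < 2, j < 2) (if (i == ord_max) && (j == ord0) then 0%R else 1%R).

Lemma umx_unit (p : nat) : umx p \in unitmx.
Proof.
rewrite unitmxE (expand_det_col _ ord0) !big_ord_recl big_ord0 /cofactor.
rewrite !det_mx11 /umx !mxE /=.
by rewrite mul0r !addr0 mul1r expr0 mulr1 unitr1.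
Qed.

Definition uGL (p : nat) : {'GL_2(p)} := FinRing.unit _ (umx_unit p).

Definition Ugrp (p : nat) : {group {'GL_2(p)}} := <[uGL p]>%G.

From HB Require Import structures.
From mathcomp Require Import all_boot all_order all_algebra all_fingroup all_solvable.
From mathcomp Require Import finfield ring.
Set Implicit Arguments. Unset Strict Implicit. Unset Printing Implicit Defensive.
Import GRing.Theory.
Local Open Scope ring_scope.
Local Open Scope group_scope.

(* U = <u> is a normal subgroup of order p of H = D U, and the diagonal group D
   has order prime to p, since its elements satisfy d^p = d.  As phi is trivial
   modulo U, phi(D) is another complement to U in H, so by Schur-Zassenhaus
   phi(D) = D^x for some x in U; since D meets U trivially, phi agrees with
   conjugation by x on D.  On U, phi is a power map u -> u^k with p not dividing
   k, which is conjugation by diag(1, k); this matrix centralises D, hence phi is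
   conjugation by diag(1, k) x, an element of B. *)

Lemma ord2_cases (i : 'I_2) : i = ord0 \/ i = ord_max.
Proof. by case: i => [[|[|//]] Hi]; [left | right]; apply: val_inj. Qed.

Lemma mulmx2E (R : pzSemiRingType) (M N : 'M[R]_2) i j :
  (M *m N) i j = (M i ord0 * N ord0 j + M i ord_max * N ord_max j)%R.
Proof.
rewrite mxE !big_ord_recl big_ord0 addr0.
by have -> : lift ord0 ord0 = ord_max :> 'I_2 by apply: val_inj.
Qed.

Lemma det_mx2 (R : comPzRingType) (M : 'M[R]_2) :
  \det M = (M ord0 ord0 * M ord_max ord_max - M ord_max ord0 * M ord0 ord_max)%R.
Proof.
rewrite (expand_det_col _ ord0) !big_ord_recl big_ord0 /cofactor !det_mx11 !mxE.
have -> : lift ord0 ord0 = ord_max :> 'I_2 by apply: val_inj.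
have -> : lift ord_max ord0 = ord0 :> 'I_2 by apply: val_inj.
by rewrite addr0 expr0 expr1 !mul1r mulN1r mulrN.
Qed.

Lemma GL2_ext (R : finComUnitRingType) (g h : {'GL_2[R]}) :
  GLval g ord0 ord0 = GLval h ord0 ord0 -> GLval g ord0 ord_max = GLval h ord0 ord_max ->
  GLval g ord_max ord0 = GLval h ord_max ord0 ->
  GLval g ord_max ord_max = GLval h ord_max ord_max ->
  g = h.
Proof.
move=> e00 e01 e10 e11; apply/val_inj/matrixP => i j.
by case: (ord2_cases i) => ->; case: (ord2_cases j) => ->.
Qed.

Section AutConj.

Variables (gT : finGroupType) (H : {group gT}) (phi : {perm gT}).
Hypothesis AutHphi : phi \in Aut H.

Lemma Aut_conj_cycle u g :
  u \in H -> phi u = u ^ g -> {in <[u]>, forall v, phi v = v ^ g}.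
Proof.
move=> Hu phiu _ /cycleP[i ->].
by rewrite -(autmE AutHphi) morphX //= autmE phiu conjXg.
Qed.

Lemma Aut_conj_mulg (D U : {group gT}) g : H :=: D * U ->
  {in D, forall d, phi d = d ^ g} -> {in U, forall u, phi u = u ^ g} ->
  {in H, forall x, phi x = x ^ g}.
Proof.
move=> defH phiD phiU x; rewrite defH => /mulsgP[d u Dd Uu ->].
have Hd : d \in H by rewrite defH (subsetP (mulG_subl U D)).
have Hu : u \in H by rewrite defH (subsetP (mulG_subr D U)).
by rewrite (morphicP (Aut_morphic AutHphi)) // phiD // phiU // conjMg.
Qed.

Section TrivialModNormal.

Variables D U : {group gT}.
Hypotheses (defH : H :=: D * U) (solU : solvable U) (nUD : D \subset 'N(U)).
Hypotheses (coUD : coprime #|U| #|D|) (tiDU : D :&: U = 1).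
Hypothesis phi_modU : forall x, x \in H -> coset U x = coset U (phi x).

Let nUH : H \subset 'N(U).
Proof. by rewrite defH mul_subG ?normG. Qed.

Lemma Aut_modU_rcoset x : x \in H -> phi x \in U :* x.
Proof.
move=> Hx; have Hphix := Aut_closed AutHphi Hx.
have := congr1 val (phi_modU Hx).
by rewrite /= !val_coset ?(subsetP nUH) // => ->; apply: rcoset_refl.
Qed.

Lemma Aut_modU_stable u : u \in U -> phi u \in U.
Proof.
move=> Uu; have Hu : u \in H by rewrite defH (subsetP (mulG_subr D U)).
by have := Aut_modU_rcoset Hu; rewrite rcoset_id.
Qed.

Lemma Aut_modU_conj_complement : exists2 x, x \in U & {in D, forall d, phi d = d ^ x}.
Proof.
pose f := autm AutHphi.
have sDH : D \subset H by rewrite defH mulG_subl.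
have sfDH : f @* D \subset U * D.
  by rewrite -(normC nUD) -defH; apply: subset_trans (morphimS f sDH) _; rewrite im_autm.
have [x Ux defFD] :=
  SchurZassenhaus_trans_sol solU nUD sfDH coUD (card_injm (injm_autm AutHphi) sDH).
exists x => // d Dd.
have Hd := subsetP sDH d Dd.
have : phi d ^ x^-1 \in D by rewrite -mem_conjgV invgK -defFD -(autmE AutHphi) mem_morphim.
set e := phi d ^ x^-1 => De.
have injDU : 'injm (restrm nUD (coset U)) by rewrite ker_restrm ker_coset tiDU.
rewrite -[phi d](conjgKV x) -/e; congr (_ ^ x).
apply: (injmP injDU) => //=.
have NUphid : phi d \in 'N(U) := subsetP nUH _ (Aut_closed AutHphi Hd).
have NUx : x^-1 \in 'N(U) by rewrite groupV (subsetP (normG U)).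
by rewrite /restrm /e (phi_modU Hd) morphJ //= (coset_id (groupVr Ux)) conjg1.
Qed.

End TrivialModNormal.

End AutConj.

Section BorelGL2.

Variable p : nat.

(* Ring constants carry %R: in group_scope, [1 : 'F_p] is the identity of the
   additive group 'F_p, that is 0. *)
Lemma uGL_expgE i :
  [/\ GLval (uGL p ^+ i) ord0 ord0 = 1%R, GLval (uGL p ^+ i) ord0 ord_max = i%:R,
      GLval (uGL p ^+ i) ord_max ord0 = 0%R & GLval (uGL p ^+ i) ord_max ord_max = 1%R].
Proof.
elim: i => [|i [e00 e01 e10 e11]]; first by rewrite expg0 GL_1E !mxE.
by rewrite expgSr GL_MxE !mulmx2E e00 e01 e10 e11 /= /umx !mxE /=; split; ring.
Qed.

Lemma uGL_expg_eq1 k : (uGL p ^+ k == 1) = (k%:R == 0 :> 'F_p)%R.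
Proof.
have [e00 e01 e10 e11] := uGL_expgE k.
apply/eqP/eqP => [uk1 | k0]; first by rewrite -e01 uk1 GL_1E mxE.
by apply: GL2_ext; rewrite ?e00 ?e01 ?e10 ?e11 ?k0 GL_1E !mxE.
Qed.

Lemma uGL_neq1 : uGL p != 1.
Proof. by rewrite -[uGL p]expg1 uGL_expg_eq1 mulr1n oner_eq0. Qed.

Lemma UgrpP v :
  reflect [/\ GLval v ord0 ord0 = 1%R, GLval v ord_max ord0 = 0%R
             & GLval v ord_max ord_max = 1%R]
          (v \in Ugrp p).
Proof.
apply: (iffP (cycleP _ v)) => [[i ->] | [e00 e10 e11]]; first by case: (uGL_expgE i).
exists (GLval v ord0 ord_max : nat).
have [f00 f01 f10 f11] := uGL_expgE (GLval v ord0 ord_max).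
by apply: GL2_ext; rewrite ?f00 ?f01 ?f10 ?f11 ?natr_Zp.
Qed.

Lemma diagGL_TI_Ugrp (D : {group {'GL_2(p)}}) : D \subset diagGL p -> D :&: Ugrp p = 1.
Proof.
move=> sDdiag; apply/trivgP/subsetP => v /setIP[/(subsetP sDdiag)].
rewrite inE => /andP[/eqP e10 /eqP e01] /UgrpP[e00 _ e11].
by apply/set1P/GL2_ext; rewrite GL_1E !mxE.
Qed.

Lemma diagGL_commute c d : c \in diagGL p -> d \in diagGL p -> commute c d.
Proof.
rewrite !inE => /andP[/eqP c10 /eqP c01] /andP[/eqP d10 /eqP d01].
by apply: GL2_ext; rewrite !GL_MxE !mulmx2E ?c10 ?c01 ?d10 ?d01; ring.
Qed.

Lemma Borel_group_set : group_set (Borel p).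
Proof.
apply/group_setP; split=> [|g h]; first by rewrite inE GL_1E mxE.
rewrite !inE => /eqP g10 /eqP h10.
by rewrite GL_MxE mulmx2E g10 h10 mul0r mulr0 addr0.
Qed.

Canonical Borel_group := group Borel_group_set.

Lemma sub_Ugrp_Borel : Ugrp p \subset Borel p.
Proof. by apply/subsetP => v /UgrpP[_ e10 _]; rewrite inE e10. Qed.

Lemma sub_diagGL_Borel : diagGL p \subset Borel p.
Proof. by apply/subsetP => d; rewrite !inE => /andP[]. Qed.

Lemma Borel_norm_Ugrp : Borel p \subset 'N(Ugrp p).
Proof.
apply/subsetP => g; rewrite inE => /eqP g10.
have g00 : GLval g ord0 ord0 != 0%R.
  by apply: contraNneq (GL_det g) => g00; rewrite det_mx2 g00 g10 !mul0r subrr.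
rewrite inE -cycleJ cycle_subG.
set k := (GLval g ord_max ord_max / GLval g ord0 ord0)%R.
have [f00 f01 f10 f11] := uGL_expgE k.
suff -> : uGL p ^ g = uGL p ^+ k by rewrite groupX ?cycle_id.
apply: (mulgI g); rewrite conjgE !mulgA mulgV mul1g.
apply: GL2_ext;
  rewrite !GL_MxE !mulmx2E ?f00 ?f01 ?f10 ?f11 ?natr_Zp ?g10 /= /umx !mxE /=; try ring.
by rewrite /k [(GLval g ord0 ord0 * _)%R]mulrC divfK //; ring.
Qed.

Lemma conj_diagGL_uGL k : (k%:R != 0 :> 'F_p)%R ->
  exists2 c, c \in diagGL p & uGL p ^ c = uGL p ^+ k.
Proof.
move=> k0.
pose M : 'M['F_p]_2 := \matrix_(i, j) (if i == j then (if i == ord0 then 1 else k%:R) else 0)%R.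
have Munit : M \in unitmx.
  by rewrite unitmxE det_mx2 !mxE /= mulr0 subr0 mul1r unitfE.
pose c : {'GL_2(p)} := FinRing.unit _ Munit.
have [f00 f01 f10 f11] := uGL_expgE k.
exists c; first by rewrite inE /= !mxE.
apply: (mulgI c); rewrite conjgE !mulgA mulgV mul1g.
by apply: GL2_ext; rewrite !GL_MxE !mulmx2E ?f00 ?f01 ?f10 ?f11 /= /umx !mxE /=; ring.
Qed.

Hypothesis p_pr : prime p.

Lemma order_uGL : #[uGL p] = p.
Proof.
have u1 : #[uGL p] != 1%N by rewrite order_eq1 uGL_neq1.
apply/(prime_nt_dvdP p_pr u1).
by rewrite order_dvdn uGL_expg_eq1 pchar_Fp_0.
Qed.

Lemma diagGL_expg_prime d : d \in diagGL p -> d ^+ p = d.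
Proof.
rewrite inE => /andP[/eqP d10 /eqP d01].
have frob (a : 'F_p) : (a ^+ p)%R = a by rewrite -{2}(expf_card a) card_Fp.
have diag_expg n : [/\ GLval (d ^+ n) ord0 ord0 = (GLval d ord0 ord0 ^+ n)%R,
    GLval (d ^+ n) ord0 ord_max = 0%R, GLval (d ^+ n) ord_max ord0 = 0%R &
    GLval (d ^+ n) ord_max ord_max = (GLval d ord_max ord_max ^+ n)%R].
  elim: n => [|n [e00 e01 e10 e11]]; first by rewrite expg0 GL_1E !mxE !expr0.
  by rewrite expgSr GL_MxE !mulmx2E e00 e01 e10 e11 d10 d01 !exprSr; split; ring.
have [e00 e01 e10 e11] := diag_expg p.
by apply: GL2_ext; rewrite ?e00 ?e01 ?e10 ?e11 ?frob ?d10 ?d01.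
Qed.

Lemma coprime_Ugrp_diagGL (D : {group {'GL_2(p)}}) :
  D \subset diagGL p -> coprime #|Ugrp p| #|D|.
Proof.
move=> sDdiag; rewrite -orderE order_uGL prime_coprime //.
apply/negP => /(Cauchy p_pr)[d Dd ord_d].
have := expg_order d; rewrite ord_d diagGL_expg_prime ?(subsetP sDdiag) // => d1.
by move: (prime_gt1 p_pr); rewrite -ord_d d1 order1.
Qed.

End BorelGL2.

Theorem proposition3p4 (p : nat) (p_pr : prime p)
  (D H : {group {'GL_2(p)}})
  (hD : D \subset diagGL p)
  (hH : H :=: D * Ugrp p)
  (hdiv : (p %| #|H|)%N)
  (phi : {perm {'GL_2(p)}})
  (hphi : phi \in Aut H)
  (hpi : forall x, x \in H -> coset (Ugrp p) x = coset (Ugrp p) (phi x)) :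
  exists2 A : {'GL_2(p)}, A \in Borel p & forall x, x \in H -> phi x = A * x * A^-1.
Proof.
have nUD := subset_trans (subset_trans hD (sub_diagGL_Borel p)) (Borel_norm_Ugrp p).
have solU : solvable (Ugrp p) := abelian_sol (cycle_abelian _).
have [x Ux phiD] := Aut_modU_conj_complement hphi hH solU nUD
  (coprime_Ugrp_diagGL p_pr hD) (diagGL_TI_Ugrp hD) hpi.
have Hu : uGL p \in H by rewrite hH (subsetP (mulG_subr D _)) ?cycle_id.
have [k phiuk] := cycleP _ _ (Aut_modU_stable hphi hH nUD hpi (cycle_id (uGL p))).
have k0 : (k%:R != 0 :> 'F_p)%R.
  rewrite -uGL_expg_eq1 -phiuk -(autmE hphi) (morph_injm_eq1 (injm_autm hphi)) //.
  exact: uGL_neq1.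
have [c Dc uc] := conj_diagGL_uGL k0.
exists (c * x)^-1.
  by rewrite groupV groupM ?(subsetP (sub_diagGL_Borel p) c) ?(subsetP (sub_Ugrp_Borel p) x).
move=> y Hy; rewrite invgK -mulgA -conjgE; apply: (Aut_conj_mulg hphi hH) Hy => [d Dd | ].
  rewrite phiD // conjgM; congr (_ ^ x); apply/esym/conjg_fixP/commgP.
  exact: diagGL_commute (subsetP hD d Dd) Dc.
suff phiu : phi (uGL p) = uGL p ^ (c * x).
  by move=> v Uv; exact: (Aut_conj_cycle hphi Hu phiu Uv).
rewrite phiuk conjgM uc; apply/esym/conjg_fixP/commgP.
by apply: (centsP (cycle_abelian (uGL p))); rewrite ?groupX ?cycle_id.
Qed.
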